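(* Let $m>n$ be coprime positive integers, $k\in\mathbb Z$, $\alpha=\epsilon_i-\delta_j$ and $\beta=\nu^{-k}(\alpha)$. If $\lambda\in X_{\pm\alpha}$, then $x(\lambda,k)\in\Pi_{\pm\beta}$ and $x(t_{\pm\alpha}(\lambda),k)=\tau_{\pm\beta}(x(\lambda,k))$.
   Context: $X$ is the set of partitions $\lambda=(\lambda_1\ge\dots\ge\lambda_n\ge0)$ with $\lambda_1\le m$, drawn in an $n\times m$ rectangle with rows $\epsilon_1,\dots,\epsilon_n$ top to bottom and columns $\delta_1,\dots,\delta_m$; the diagram consists of boxes $\epsilon_p-\delta_q$ with $q\le\lambda_{n+1-p}$; $\lambda'_q=\#\{p:\lambda_p\ge q\}$. $X_\alpha$ (resp. $X_{-\alpha}$): diagrams for which box $\alpha$ is an outer (resp. inner) corner; $t_\alpha$ adds and $t_{-\alpha}$ removes it. Elements of $\mathbb Z^{n|m}$ are $(a_1,\dots,a_n|b_1,\dots,b_m)=\sum a_p\epsilon_p-\sum b_q\delta_q$. $x(\lambda)$ has $a_p=m(n-p)+n\lambda_{n+1-p}$, $b_q=n(q-1)+m\lambda'_q$, and $x(\lambda,k)=\nu^{-k}x(\lambda)+k\mathbf m$ with $\mathbf m=(m,\dots,m|m,\dots,m)$, where $\nu$ is linear with $\nu\epsilon_p=\epsilon_{p+1}$ (indices mod $n$ in $\{1,\dots,n\}$), $\nu\delta_q=\delta_q$. For $\gamma=\epsilon_p-\delta_q$: $\Pi_\gamma=\{a_p=b_q\}$, $\Pi_{-\gamma}=\{a_p-b_q=n-m\}$,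 $\tau_\gamma$ adds $n$ to $a_p$ and $m$ to $b_q$, $\tau_{-\gamma}=\tau_\gamma^{-1}$. *)

From mathcomp Require Import all_boot all_order all_algebra.
Set Implicit Arguments. Unset Strict Implicit. Unset Printing Implicit Defensive.
Import GRing.Theory Num.Theory.
Local Open Scope ring_scope.

(* Conventions (0-based ordinals for the 1-based indices of the paper):
   - the ordinal p : 'I_n stands for the row / vector index eps_(p+1);
   - the ordinal q : 'I_m stands for the column / vector index delta_(q+1);
   - a partition lambda = (lambda_1 >= ... >= lambda_n >= 0) is an
     l : {ffun 'I_n -> nat} with  l r = lambda_(r+1).
   Row p (1-based) has length lambda_(n+1-p); in 0-based terms row p : 'I_n
   has length  l (rev_ord p). *)

Definition part (n : nat) := {ffun 'I_n -> nat}.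

Definition inX (n m : nat) (l : part n) : Prop :=
  (forall r s : 'I_n, (r <= s)%N -> (l s <= l r)%N) /\ (forall r, (l r <= m)%N).

(* a box eps_p - delta_q is encoded as the pair (p, q) *)
Definition box (n m : nat) := ('I_n * 'I_m)%type.

Definition diag (n m : nat) (l : part n) : {set box n m} :=
  [set b : box n m | (b.2.+1 <= l (rev_ord b.1))%N].

Definition X_add (n m : nat) (a : box n m) (l : part n) : Prop :=
  inX m l /\ a \notin diag m l /\
  exists mu : part n, inX m mu /\ diag m mu = a |: diag m l.

Definition X_rem (n m : nat) (a : box n m) (l : part n) : Prop :=
  inX m l /\ a \in diag m l /\
  exists mu : part n, inX m mu /\ diag m mu = diag m l :\ a.

Definition t_add (n m : nat) (a : box n m) (l : part n) : part n :=
  [ffun r => if r == rev_ord a.1 then a.2.+1 else l r].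

Definition t_rem (n m : nat) (a : box n m) (l : part n) : part n :=
  [ffun r => if r == rev_ord a.1 then nat_of_ord a.2 else l r].

(* Z^{n|m}: (a_1..a_n | b_1..b_m) = sum a_p eps_p - sum b_q delta_q *)
Definition zvec (n m : nat) := ({ffun 'I_n -> int} * {ffun 'I_m -> int})%type.

Definition conj_part (n : nat) (l : part n) (q : nat) : nat :=
  #|[set r : 'I_n | (q <= l r)%N]|.

Definition xl (n m : nat) (l : part n) : zvec n m :=
  ([ffun p : 'I_n => ((m * (n - p.+1) + n * l (rev_ord p))%N)%:Z],
   [ffun q : 'I_m => ((n * q + m * conj_part l q.+1)%N)%:Z]).

Definition zit (T : Type) (f g : T -> T) (j : int) : T -> T :=
  match j with
  | Posz k => iter k f
  | Negz k => iter k.+1 g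
  end.

(* nu : eps_p |-> eps_(p+1) (indices mod n), delta_q |-> delta_q, extended
   linearly to Z^{n|m}: the coefficient of eps_r in nu x is a_(r-1). *)
Definition nu_vec (n m : nat) (x : zvec n m) : zvec n m :=
  ([ffun r => x.1 (ord_pred r)], x.2).
Definition nu_vec_inv (n m : nat) (x : zvec n m) : zvec n m :=
  ([ffun r => x.1 (ordS r)], x.2).
Definition nuz_vec (n m : nat) (j : int) : zvec n m -> zvec n m :=
  zit (@nu_vec n m) (@nu_vec_inv n m) j.

Definition nu_root (n m : nat) (a : box n m) : box n m := (ordS a.1, a.2).
Definition nu_root_inv (n m : nat) (a : box n m) : box n m := (ord_pred a.1, a.2).
Definition nuz_root (n m : nat) (j : int) : box n m -> box n m :=
  zit (@nu_root n m) (@nu_root_inv n m) j.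

Definition xk (n m : nat) (l : part n) (k : int) : zvec n m :=
  let y := nuz_vec (- k) (xl m l) in
  ([ffun p => y.1 p + k * m%:Z], [ffun q => y.2 q + k * m%:Z]).

Definition Pi_pos (n m : nat) (g : box n m) (x : zvec n m) : Prop :=
  x.1 g.1 = x.2 g.2.
Definition Pi_neg (n m : nat) (g : box n m) (x : zvec n m) : Prop :=
  x.1 g.1 - x.2 g.2 = n%:Z - m%:Z.

Definition tau_pos (n m : nat) (g : box n m) (x : zvec n m) : zvec n m :=
  ([ffun p => if p == g.1 then x.1 p + n%:Z else x.1 p],
   [ffun q => if q == g.2 then x.2 q + m%:Z else x.2 q]).
Definition tau_neg (n m : nat) (g : box n m) (x : zvec n m) : zvec n m :=
  ([ffun p => if p == g.1 then x.1 p - n%:Z else x.1 p],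
   [ffun q => if q == g.2 then x.2 q - m%:Z else x.2 q]).

(* If alpha = eps_i - delta_j is an outer corner of lambda, then row i has j - 1 boxes
   and exactly n - i rows have at least j boxes, so a_i = m(n - i) + n(j - 1) = b_j;
   adding the box raises a_i by n and b_j by m, which is tau_alpha.  Removing a box is
   adding it read backwards: lambda = t_alpha(mu) with mu = t_{-alpha}(lambda) in
   X_alpha, and tau_{-alpha} inverts tau_alpha.  Finally nu^{-k} carries coordinate p
   to coordinate nu^{-k}(p) and commutes with the tau's, while adding k*(m,...,m|m,...,m)
   changes no difference of coordinates. *)

From mathcomp Require Import all_boot all_order all_algebra zify.
Set Implicit Arguments. Unset Strict Implicit. Unset Printing Implicit Defensive.
Import GRing.Theory Num.Theory.
Local Open Scope ring_scope.

Lemma card_ltn_ord k c : (c <= k)%N -> #|[set r : 'I_k | (r < c)%N]| = c.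
Proof.
move=> ck; have widen_inj : injective (widen_ord ck) by move=> r s [] /val_inj.
rewrite -[RHS](card_ord c) -(card_imset _ widen_inj).
apply: eq_card => r; rewrite inE; apply/idP/imsetP => [rc | [s _ ->]] //=.
by exists (Ordinal rc) => //; apply: val_inj.
Qed.

Section Corners.
Variables n m : nat.
Implicit Types (l mu : part n) (i : 'I_n) (j : 'I_m).

Lemma card_diag_row l i : (l (rev_ord i) <= m)%N ->
  #|[set q : 'I_m | (i, q) \in diag m l]| = l (rev_ord i).
Proof. by move=> lm; rewrite -[RHS](card_ltn_ord lm); apply: eq_card => q; rewrite !inE. Qed.

Lemma t_add_of_diag i j l mu : (forall r, l r <= m)%N -> (forall r, mu r <= m)%N ->
  (i, j) \notin diag m l -> diag m mu = (i, j) |: diag m l ->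
  l (rev_ord i) = j /\ mu = t_add (i, j) l.
Proof.
move=> lm mum ij_l dmu.
have mu_row p : mu (rev_ord p) = ((p == i) + l (rev_ord p))%N.
  rewrite -(card_diag_row (mum _)) -(card_diag_row (lm _)).
  case: eqP => [->|/eqP ne]; last first.
    by apply: eq_card => q; rewrite dmu !inE xpair_eqE (negbTE ne).
  have -> : [set q | (i, q) \in diag m mu] = j |: [set q | (i, q) \in diag m l].
    by apply/setP => q; rewrite dmu !inE xpair_eqE eqxx.
  by rewrite cardsU1 inE ij_l.
have lij : l (rev_ord i) = j.
  have := setU11 (i, j) (diag m l); rewrite -dmu !inE mu_row eqxx.
  by move: ij_l; rewrite inE /=; lia.
split=> //; apply/ffunP => r; rewrite ffunE -[in LHS](rev_ordK r) mu_row.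
by rewrite rev_ordK (can2_eq rev_ordK rev_ordK); case: eqP => [->|]; rewrite ?lij.
Qed.

Lemma X_addP i j l : X_add (i, j) l ->
  [/\ inX m l, inX m (t_add (i, j) l) & l (rev_ord i) = j].
Proof.
case=> Xl [ij_l [mu [Xmu dmu]]].
by have [lij <-] := t_add_of_diag Xl.2 Xmu.2 ij_l dmu.
Qed.

Lemma t_addK i j l : l (rev_ord i) = j -> t_rem (i, j) (t_add (i, j) l) = l.
Proof. by move=> lij; apply/ffunP => r; rewrite !ffunE; case: eqP => [->|]. Qed.

Lemma X_remP i j l : X_rem (i, j) l ->
  X_add (i, j) (t_rem (i, j) l) /\ t_add (i, j) (t_rem (i, j) l) = l.
Proof.
case=> Xl [ij_l [mu [Xmu dmu]]].
have ij_mu : (i, j) \notin diag m mu by rewrite dmu setD11.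
have dl : diag m l = (i, j) |: diag m mu by rewrite dmu setD1K.
have [muij el] := t_add_of_diag Xmu.2 Xl.2 ij_mu dl.
rewrite el t_addK //; split=> //.
by split=> //; split=> //; exists (t_add (i, j) mu); rewrite -el.
Qed.

Lemma conj_part_threshold l q c : (c <= n)%N ->
  (forall r : 'I_n, (q <= l r)%N = (r < c)%N) -> conj_part l q = c.
Proof.
move=> cn lq; rewrite /conj_part -[RHS](card_ltn_ord cn).
by apply: eq_card => r; rewrite !inE lq.
Qed.

Lemma conj_part_corner i j l : inX m l -> inX m (t_add (i, j) l) -> l (rev_ord i) = j ->
  conj_part l j.+1 = rev_ord i /\ conj_part (t_add (i, j) l) j.+1 = (rev_ord i).+1.
Proof.
move=> [lmon _] [Lmon _] lij.
have Li : t_add (i, j) l (rev_ord i) = j.+1 by rewrite ffunE eqxx.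
have Lr (r : 'I_n) : (r < rev_ord i)%N || (rev_ord i < r)%N -> t_add (i, j) l r = l r.
  by rewrite -neq_ltn ffunE val_eqE => /negbTE ->.
split.
  apply: conj_part_threshold => [|r]; first exact/ltnW/ltn_ord.
  case: (ltngtP r (rev_ord i)) => [r_lt|r_gt|/val_inj ->]; last by rewrite lij ltnn.
    by rewrite -(Lr r) ?r_lt // -Li (Lmon _ _ (ltnW r_lt)).
  by apply/negbTE; rewrite -ltnNge ltnS -lij (lmon _ _ (ltnW r_gt)).
apply: conj_part_threshold => [|r]; first exact: ltn_ord.
case: (ltngtP r (rev_ord i)) => [r_lt|r_gt|/val_inj ->]; last by rewrite Li !ltnSn.
  by rewrite -Li (Lmon _ _ (ltnW r_lt)) ltnS (ltnW r_lt).
rewrite [RHS]ltnS [RHS]leqNgt r_gt; apply/negbTE.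
by rewrite -ltnNge ltnS Lr ?r_gt ?orbT // -lij (lmon _ _ (ltnW r_gt)).
Qed.

Lemma conj_part_t_add_neq i j l (q : 'I_m) : l (rev_ord i) = j -> q != j ->
  conj_part (t_add (i, j) l) q.+1 = conj_part l q.+1.
Proof.
move=> lij qj; apply: eq_card => r; rewrite !inE ffunE.
by case: eqP => [->|] //=; rewrite lij ltnS leq_eqVlt val_eqE (negbTE qj).
Qed.

Lemma xl_t_add i j l : inX m l -> inX m (t_add (i, j) l) -> l (rev_ord i) = j ->
  Pi_pos (i, j) (xl m l) /\ xl m (t_add (i, j) l) = tau_pos (i, j) (xl m l).
Proof.
move=> Xl XL lij; have [cl cL] := conj_part_corner Xl XL lij.
split; first by rewrite /Pi_pos !ffunE /= lij cl addnC.
congr pair; apply/ffunP => p; rewrite !ffunE /=.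
  rewrite (inj_eq rev_ord_inj); case: eqP => [->|] //.
  by rewrite lij -PoszD; congr Posz; lia.
case: (eqVneq p j) => [->|pj]; last by rewrite conj_part_t_add_neq.
by rewrite cL cl -PoszD; congr Posz; lia.
Qed.
End Corners.

Section IntegerIterates.
Variables (A T : Type) (f g : T -> T) (f' g' : A -> A).

Lemma zit_equivariant (F : A -> T -> T) :
  (forall a x, f (F a x) = F (f' a) (f x)) -> (forall a x, g (F a x) = F (g' a) (g x)) ->
  forall j a x, zit f g j (F a x) = F (zit f' g' j a) (zit f g j x).
Proof.
have iterF h h' : (forall a x, h (F a x) = F (h' a) (h x)) ->
    forall k a x, iter k h (F a x) = F (iter k h' a) (iter k h x).
  by move=> hF; elim=> [|k IH] a x //=; rewrite IH hF.
by move=> fF gF [] k a x; [exact (iterF _ _ fF k a x) | exact (iterF _ _ gF k.+1 a x)].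
Qed.

Lemma zit_invariant (B : Type) (e : A -> T -> B) :
  (forall a x, e (f' a) (f x) = e a x) -> (forall a x, e (g' a) (g x) = e a x) ->
  forall j a x, e (zit f' g' j a) (zit f g j x) = e a x.
Proof.
have iter_e h h' : (forall a x, e (h' a) (h x) = e a x) ->
    forall k a x, e (iter k h' a) (iter k h x) = e a x.
  by move=> he; elim=> [|k IH] a x //=; rewrite he IH.
by move=> fe ge [] k a x; [exact (iter_e _ _ fe k a x) | exact (iter_e _ _ ge k.+1 a x)].
Qed.
End IntegerIterates.

Section TwistedCoordinates.
Variables n m : nat.
Implicit Types (a : box n m) (x : zvec n m) (l : part n) (k : int).

Lemma nuz_vec_tau_pos j a x :
  nuz_vec j (tau_pos a x) = tau_pos (nuz_root j a) (nuz_vec j x).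
Proof.
apply: zit_equivariant => {j a x} a x; congr pair; apply/ffunP => r; rewrite !ffunE /=.
  by rewrite (can2_eq (@ord_predK n) (@ordSK n)).
by rewrite (can2_eq (@ordSK n) (@ord_predK n)).
Qed.

Lemma nuz_vec_coord j a x :
  ((nuz_vec j x).1 (nuz_root j a).1, (nuz_vec j x).2 (nuz_root j a).2) = (x.1 a.1, x.2 a.2).
Proof.
by apply: (zit_invariant (e := fun a x => (x.1 a.1, x.2 a.2))) => {j a x} a x;
  rewrite /= ffunE ?ordSK ?ord_predK.
Qed.

Lemma tau_posK a : cancel (tau_pos a) (tau_neg a).
Proof.
by case=> x1 x2; congr pair; apply/ffunP => r; rewrite !ffunE; case: eqP => _; rewrite ?addrK.
Qed.

Lemma Pi_neg_tau_pos a x : Pi_pos a x -> Pi_neg a (tau_pos a x).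
Proof. by rewrite /Pi_neg !ffunE !eqxx => ->; rewrite opprD addrACA subrr add0r. Qed.

Lemma Pi_pos_xk a l k : Pi_pos a (xl m l) -> Pi_pos (nuz_root (- k) a) (xk m l k).
Proof.
move=> Hpi; rewrite /Pi_pos /xk /=; set y := nuz_vec _ _; rewrite !ffunE.
by case: (nuz_vec_coord (- k) a (xl m l)) => -> ->; rewrite Hpi.
Qed.

Lemma xk_tau_pos a l l' k : xl m l' = tau_pos a (xl m l) ->
  xk m l' k = tau_pos (nuz_root (- k) a) (xk m l k).
Proof.
move=> e; rewrite /xk e nuz_vec_tau_pos /=.
by congr pair; apply/ffunP => r; rewrite !ffunE; case: eqP => _ //; rewrite addrAC.
Qed.

Lemma xk_t_add (i : 'I_n) (j : 'I_m) l k : X_add (i, j) l ->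
  Pi_pos (nuz_root (- k) (i, j)) (xk m l k) /\
  xk m (t_add (i, j) l) k = tau_pos (nuz_root (- k) (i, j)) (xk m l k).
Proof.
case/X_addP => Xl XL lij; have [Hpi Hx] := xl_t_add Xl XL lij.
by split; [exact: Pi_pos_xk | exact: xk_tau_pos].
Qed.
End TwistedCoordinates.

Theorem lemma4p13 (n m : nat) (hn : (0 < n)%N) (hnm : (n < m)%N)
  (hcop : coprime m n) (k : int) (i : 'I_n) (j : 'I_m) (l : part n) :
  let alpha : box n m := (i, j) in
  let beta : box n m := nuz_root (- k) alpha in
  (X_add alpha l ->
     Pi_pos beta (xk m l k) /\ xk m (t_add alpha l) k = tau_pos beta (xk m l k)) /\
  (X_rem alpha l ->
     Pi_neg beta (xk m l k) /\ xk m (t_rem alpha l) k = tau_neg beta (xk m l k)).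
Proof.
move=> alpha beta; split; first exact: xk_t_add.
case/X_remP => X_mu l_eq; have [Pi_mu x_eq] := xk_t_add k X_mu; rewrite l_eq in x_eq.
by rewrite x_eq tau_posK; split; first exact: Pi_neg_tau_pos.
Qed.
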